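(* Let $\varepsilon$ be an integer with $\varepsilon\equiv 2\pmod{4}$. Then there exist infinitely many positive odd integers $n$ with the property that there exist positive integers $d_1, d_2$, each dividing $\frac{n^2+1}{2}$, such that $d_1+d_2=4n+\varepsilon$. *)

From Stdlib Require Import ZArith.
Open Scope Z_scope.

Definition good (eps n : Z) : Prop :=
  exists d1 d2 : Z, 0 < d1 /\ 0 < d2 /\
    (d1 | (n ^ 2 + 1) / 2) /\ (d2 | (n ^ 2 + 1) / 2) /\
    d1 + d2 = 4 * n + eps.

(* Take d1 = g x and d2 = g y, where (x, y) is an odd point of the conic
   g (x + y)^2 - 2 eps (x + y) + h = K x y with g h = eps^2 + 16.  Putting 4 n = g (x + y) - eps
   gives 16 (n^2 + 1) = (g (x + y) - eps)^2 + 16 = g K x y, and d1 + d2 = 4 n + eps.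
   Completing the square turns the conic into W^2 - c K V^2 = const (c = K - 4 g,
   W = c (x + y) + 4 eps, V = x - y), so a unit of Z[sqrt (c K)] congruent to 1 modulo 16 c
   produces infinitely many such points with the same parities; such a unit exists by the
   Dirichlet-pigeonhole proof of Pell's equation.  An explicit starting point exists in each
   of the cases eps = 8 t + 2 and eps = 8 t + 6. *)

From Stdlib Require Import ZArith Reals Lra Lia Psatz Znumtheory Zpow_facts List.
From Stdlib Require Import Classical IndefiniteDescription.
Open Scope Z_scope.

Lemma pigeonhole {A : Type} (l : list A) (f : nat -> A) :
  (forall j, (j <= length l)%nat -> In (f j) l) ->
  exists i j, (i < j <= length l)%nat /\ f i = f j.
Proof.
  intros Hf.
  set (vals := map f (seq 0 (S (length l)))).
  assert (Hdup : ~ NoDup vals).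
  { intro Hnd. apply NoDup_incl_length with (l' := l) in Hnd.
    - unfold vals in Hnd. rewrite length_map, length_seq in Hnd. lia.
    - intros a Ha. unfold vals in Ha. apply in_map_iff in Ha.
      destruct Ha as [j [<- Hj]]. apply in_seq in Hj. apply Hf. lia. }
  assert (Hnth : forall k, (k < S (length l))%nat -> nth k vals (f 0%nat) = f k).
  { intros k Hk. unfold vals. rewrite map_nth, seq_nth; auto. }
  apply NNPP. intros Hno. apply Hdup. apply (NoDup_nth vals (f 0%nat)).
  unfold vals at 1 2. rewrite length_map, length_seq.
  intros i j Hi Hj E. rewrite !Hnth in E by assumption.
  destruct (Nat.lt_total i j) as [Hij | [Hij | Hij]]; auto; exfalso; apply Hno.
  - exists i, j. split; [lia | exact E].
  - exists j, i. split; [lia | auto].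
Qed.

Definition Zrange (lo : Z) (n : nat) : list Z :=
  map (fun k => lo + Z.of_nat k) (seq 0 n).

Lemma length_Zrange lo n : length (Zrange lo n) = n.
Proof. unfold Zrange. now rewrite length_map, length_seq. Qed.

Lemma in_Zrange lo n z : lo <= z < lo + Z.of_nat n -> In z (Zrange lo n).
Proof.
  intros Hz. unfold Zrange. apply in_map_iff.
  exists (Z.to_nat (z - lo)). split; [lia |]. apply in_seq. lia.
Qed.

Lemma dirichlet_approximation (alpha : R) (B : Z) :
  1 <= B -> exists x y, 1 <= y <= B /\ (Rabs (IZR x - IZR y * alpha) < / IZR B)%R.
Proof.
  intros HB.
  assert (HBr : (1 <= IZR B)%R) by (apply IZR_le; lia).
  set (phi := fun k : nat => frac_part (INR k * alpha)).
  set (cell := fun k => Int_part (IZR B * phi k)).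
  assert (Hphi : forall k, (0 <= phi k < 1)%R).
  { intro k. pose proof (base_fp (INR k * alpha)). unfold phi. lra. }
  assert (Hcell : forall k, (IZR (cell k) <= IZR B * phi k < IZR (cell k) + 1)%R).
  { intro k. pose proof (base_Int_part (IZR B * phi k)). unfold cell. lra. }
  destruct (pigeonhole (Zrange 0 (Z.to_nat B)) cell) as [i [j [Hij Heq]]].
  { intros k _. apply in_Zrange. rewrite Z2Nat.id by lia.
    pose proof (Hcell k). pose proof (Hphi k).
    assert (-1 < cell k < B) by (split; apply lt_IZR; nra). lia. }
  rewrite length_Zrange in Hij.
  exists (Int_part (INR j * alpha) - Int_part (INR i * alpha)), (Z.of_nat j - Z.of_nat i).
  split; [lia |].
  assert (Hclose : (IZR B * Rabs (phi i - phi j) < 1)%R).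
  { pose proof (Hcell i). pose proof (Hcell j). rewrite Heq in *.
    rewrite <- (Rabs_pos_eq (IZR B)) by lra. rewrite <- Rabs_mult.
    apply Rabs_def1; lra. }
  replace (IZR (Int_part (INR j * alpha) - Int_part (INR i * alpha)) -
           IZR (Z.of_nat j - Z.of_nat i) * alpha)%R with (phi i - phi j)%R
    by (unfold phi, frac_part; rewrite !minus_IZR, <- !INR_IZR_INZ; ring).
  apply (Rmult_lt_reg_l (IZR B)); [lra |].
  rewrite Rinv_r by lra. exact Hclose.
Qed.

Definition nonsquare (D : Z) : Prop := forall x y, y <> 0 -> x * x <> D * (y * y).

Definition pell_norm (D x y : Z) : Z := x * x - D * (y * y).

Lemma pell_norm_mul (D x1 y1 x2 y2 : Z) :
  pell_norm D (x1 * x2 + D * (y1 * y2)) (x1 * y2 + y1 * x2) =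
  pell_norm D x1 y1 * pell_norm D x2 y2.
Proof. unfold pell_norm. ring. Qed.

Lemma small_norm_pair (D Y : Z) :
  1 <= D -> nonsquare D -> exists x y, Y < y /\ 1 <= Z.abs (pell_norm D x y) <= D + 1.
Proof.
  intros HD Hns.
  set (B := (Z.abs Y + 1) * (D + 1) + 1).
  destruct (dirichlet_approximation (sqrt (IZR D)) B ltac:(unfold B; nia))
    as [x [y [Hy Happrox]]].
  exists x, y.
  set (s := sqrt (IZR D)) in *.
  set (r := (IZR x - IZR y * s)%R) in *.
  set (N := pell_norm D x y).
  assert (Hs : (0 <= s)%R) by apply sqrt_pos.
  assert (Hss : (s * s = IZR D)%R) by (apply sqrt_sqrt; apply IZR_le; lia).
  assert (Hs2 : (2 * s <= IZR D + 1)%R) by (pose proof (pow2_ge_0 (s - 1)); nra).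
  assert (HBr : (1 <= IZR B)%R) by (apply IZR_le; unfold B; nia).
  assert (Hyr : (1 <= IZR y <= IZR B)%R) by (split; apply IZR_le; lia).
  assert (HBe : (IZR B * Rabs r < 1)%R).
  { apply (Rmult_lt_compat_l (IZR B)) in Happrox; [| lra].
    rewrite Rinv_r in Happrox by lra. exact Happrox. }
  assert (He : (0 <= Rabs r < 1)%R) by (pose proof (Rabs_pos r); nra).
  assert (HN : (IZR (Z.abs N) <= Rabs r * (Rabs r + 2 * IZR y * s))%R).
  { rewrite abs_IZR.
    replace (IZR N) with (r * (r + 2 * IZR y * s))%R
      by (unfold N, pell_norm, r; rewrite minus_IZR, !mult_IZR, <- Hss; ring).
    rewrite Rabs_mult. apply Rmult_le_compat_l; [apply Rabs_pos |].
    eapply Rle_trans; [apply Rabs_triang |].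
    rewrite (Rabs_pos_eq (2 * IZR y * s)) by nra. lra. }
  assert (Hkey : (IZR B * IZR (Z.abs N) < 1 + 2 * IZR y * s)%R).
  { set (t := (2 * IZR y * s)%R) in *.
    assert (0 <= t)%R by (unfold t; nra).
    apply Rle_lt_trans with (IZR B * Rabs r * (Rabs r + t))%R.
    - rewrite Rmult_assoc. apply Rmult_le_compat_l; lra.
    - apply Rle_lt_trans with (Rabs r + t)%R; [| lra].
      rewrite <- (Rmult_1_l (Rabs r + t)) at 2. apply Rmult_le_compat_r; lra. }
  assert (HN0 : N <> 0) by (unfold N, pell_norm; intro E; apply (Hns x y); lia).
  assert (Hlow : B < 1 + (D + 1) * y).
  { apply lt_IZR. rewrite plus_IZR, mult_IZR, plus_IZR.
    assert (1 <= IZR (Z.abs N))%R by (apply IZR_le; lia). nra. }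
  assert (Hhigh : Z.abs N < D + 2).
  { apply lt_IZR. rewrite plus_IZR. nra. }
  split; [unfold B in Hlow; nia | lia].
Qed.

Lemma pell_unit_of_congruent_pair (D L x1 y1 x2 y2 : Z) :
  pell_norm D x1 y1 = pell_norm D x2 y2 -> pell_norm D x1 y1 <> 0 ->
  (pell_norm D x1 y1 * L | x2 - x1) -> (pell_norm D x1 y1 * L | y2 - y1) ->
  0 < y1 < y2 ->
  exists X Y, pell_norm D X Y = 1 /\ Y <> 0 /\ (L | X - 1) /\ (L | Y).
Proof.
  set (N := pell_norm D x1 y1).
  intros HN2 HN0 [a Ha] [b Hb] Hy.
  assert (Ex2 : x2 = x1 + N * L * a) by lia.
  assert (Ey2 : y2 = y1 + N * L * b) by lia.
  exists (1 + L * (x1 * a - D * y1 * b)), (L * (x1 * b - y1 * a)).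
  (* [N X = x1 x2 - D y1 y2] and [N Y = x1 y2 - x2 y1]: Brahmagupta's identity divided by [N]. *)
  set (X := 1 + L * (x1 * a - D * y1 * b)).
  set (Y := L * (x1 * b - y1 * a)).
  assert (HX : N * X = x1 * x2 - D * (y1 * y2)) by (rewrite Ex2, Ey2; unfold X, N, pell_norm; ring).
  assert (HY : N * Y = x1 * y2 - x2 * y1) by (rewrite Ex2, Ey2; unfold Y; ring).
  split; [| split; [| split]].
  - assert (E : N * N * pell_norm D X Y = N * N * 1).
    { replace (N * N * pell_norm D X Y)
        with ((N * X) * (N * X) - D * ((N * Y) * (N * Y))) by (unfold pell_norm; ring).
      rewrite HX, HY, Z.mul_1_r. unfold N at 2. rewrite HN2. unfold N, pell_norm. ring. }
    apply Z.mul_reg_l in E; [exact E | nia].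
  - intro HY0. rewrite HY0, Z.mul_0_r in HY.
    assert (E : y1 * y1 * N = y2 * y2 * N).
    { unfold N at 2. rewrite HN2.
      replace (y1 * y1 * pell_norm D x2 y2)
        with ((x2 * y1) * (x2 * y1) - D * (y1 * y1) * (y2 * y2)) by (unfold pell_norm; ring).
      replace (x2 * y1) with (x1 * y2) by lia. unfold N, pell_norm. ring. }
    apply Z.mul_reg_r in E; [nia | exact HN0].
  - exists (x1 * a - D * y1 * b). unfold X. ring.
  - exists (x1 * b - y1 * a). unfold Y. ring.
Qed.

Lemma small_norm_sequence (D : Z) :
  1 <= D -> nonsquare D ->
  exists x y : nat -> Z, (forall i j, (i < j)%nat -> 0 < y i < y j) /\
    forall k, 1 <= Z.abs (pell_norm D (x k) (y k)) <= D + 1.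
Proof.
  intros HD Hns.
  assert (Hpair : forall Y, exists p : Z * Z,
    Y < snd p /\ 1 <= Z.abs (pell_norm D (fst p) (snd p)) <= D + 1).
  { intro Y. destruct (small_norm_pair D Y HD Hns) as [x [y H]]. now exists (x, y). }
  destruct (functional_choice _ Hpair) as [F HF].
  set (q := fun k : nat => Nat.iter (S k) (fun p => F (snd p)) (0, 0)).
  exists (fun k => fst (q k)), (fun k => snd (q k)).
  assert (Hstep : forall k, snd (q k) < snd (q (S k))) by (intro k; apply (HF (snd (q k)))).
  split.
  - intros i j Hij. split.
    + induction i as [| i IH]; [apply (HF 0) | specialize (Hstep i); lia].
    + induction Hij as [| j Hij IH]; [apply Hstep | specialize (Hstep j); lia].
  - intro k. destruct k as [| k]; [apply (HF 0) | apply (HF (snd (q k)))].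
Qed.

Lemma divide_sub_of_mod_eq (m a b : Z) : m <> 0 -> a mod m = b mod m -> (m | b - a).
Proof.
  intros Hm E. apply Z.mod_divide; [exact Hm |]. apply Z.cong_iff_0. now symmetry.
Qed.

Lemma pell_unit_congruent (D L : Z) :
  1 <= D -> nonsquare D -> 1 <= L ->
  exists X Y, pell_norm D X Y = 1 /\ Y <> 0 /\ (L | X - 1) /\ (L | Y).
Proof.
  intros HD Hns HL.
  destruct (small_norm_sequence D HD Hns) as [x [y [Hy Hnorm]]].
  set (N := fun k => pell_norm D (x k) (y k)).
  set (m := fun k => Z.abs (N k) * L).
  assert (Hm : forall k, L <= m k <= (D + 1) * L)
    by (intro k; specialize (Hnorm k); unfold m, N; nia).
  (* Two pairs with the same norm [N] and the same residues modulo [|N| L] give the unit. *)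
  set (cls := fun k => (N k, x k mod m k, y k mod m k)).
  set (C := D + 1).
  set (range := Zrange 0 (Z.to_nat (C * L))).
  set (classes := list_prod (list_prod (Zrange (- C) (Z.to_nat (2 * C + 1))) range) range).
  destruct (pigeonhole classes cls) as [i [j [Hij Hcls]]].
  { intros k _. specialize (Hnorm k). specialize (Hm k).
    pose proof (Z.mod_pos_bound (x k) (m k) ltac:(lia)).
    pose proof (Z.mod_pos_bound (y k) (m k) ltac:(lia)).
    apply in_prod_iff; split; [apply in_prod_iff; split |]; apply in_Zrange;
      rewrite Z2Nat.id; unfold C, N in *; lia. }
  unfold cls in Hcls. injection Hcls as HN Hxm Hym.
  assert (Hmij : m i = m j) by (unfold m; now rewrite HN).
  rewrite <- Hmij in Hxm, Hym.
  apply (pell_unit_of_congruent_pair D L (x i) (y i) (x j) (y j)).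
  - exact HN.
  - specialize (Hnorm i). unfold N in *. lia.
  - apply Z.divide_abs_l. rewrite Z.abs_mul, (Z.abs_eq L) by lia.
    apply divide_sub_of_mod_eq; [specialize (Hm i); unfold m, N in *; lia | exact Hxm].
  - apply Z.divide_abs_l. rewrite Z.abs_mul, (Z.abs_eq L) by lia.
    apply divide_sub_of_mod_eq; [specialize (Hm i); unfold m, N in *; lia | exact Hym].
  - split; [apply (Hy i j) | apply (Hy i j)]; lia.
Qed.

Lemma pell_unit_congruent_pos (D L : Z) :
  1 <= D -> nonsquare D -> 1 <= L ->
  exists P Q, pell_norm D P Q = 1 /\ 1 < P /\ 0 < Q /\ (L | P - 1) /\ (L | Q).
Proof.
  intros HD Hns HL.
  destruct (pell_unit_congruent D L HD Hns HL) as [X [Y [HXY [HY [HLX HLY]]]]].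
  (* Square [X + Y sqrt D] to make both coordinates positive. *)
  exists (X * X + D * (Y * Y)), (Z.abs (X * Y + Y * X)).
  unfold pell_norm in HXY.
  assert (HX : X <> 0) by (intro; subst X; nia).
  split; [| split; [nia | split; [lia | split]]].
  - unfold pell_norm. rewrite <- Z.abs_mul, Z.abs_eq by nia.
    change (pell_norm D (X * X + D * (Y * Y)) (X * Y + Y * X) = 1).
    rewrite pell_norm_mul. unfold pell_norm. rewrite HXY. reflexivity.
  - replace (X * X + D * (Y * Y) - 1) with (2 * D * Y * Y) by lia.
    apply Z.divide_mul_r. exact HLY.
  - apply Z.divide_abs_r, Z.divide_add_r; [apply Z.divide_mul_r | apply Z.divide_mul_l]; exact HLY.
Qed.

Lemma nonsquare_two_mul_odd (m : Z) : Z.odd m = true -> nonsquare (2 * m).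
Proof.
  intros Hm. apply Z.odd_spec in Hm. destruct Hm as [j ->].
  intros x y. remember (Z.abs_nat y) as k eqn:Hk. revert x y Hk.
  induction k as [k IH] using (well_founded_induction Wf_nat.lt_wf).
  intros x y Hk Hy E.
  (* [x^2 = 2 m y^2] with [m] odd forces [x] and then [y] to be even. *)
  destruct (Z.Even_or_Odd x) as [[a ->] | [a ->]]; [| nia].
  destruct (Z.Even_or_Odd y) as [[b ->] | [b ->]]; [| nia].
  apply (IH (Z.abs_nat b) ltac:(lia) a b); [reflexivity | lia | nia].
Qed.

Lemma nonsquare_mul_square (D s : Z) : nonsquare D -> s <> 0 -> nonsquare (D * (s * s)).
Proof.
  intros HD Hs x y Hy E. apply (HD x (s * y)); [lia |]. rewrite E. ring.
Qed.

Lemma odd_divide_mul_pow2 (d k X : Z) :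
  Z.odd d = true -> 0 <= k -> (d | 2 ^ k * X) -> (d | X).
Proof.
  intros Hd Hk Hdiv. apply (Gauss d (2 ^ k)); [exact Hdiv |].
  apply rel_prime_Zpower_r; [exact Hk |].
  apply rel_prime_sym, prime_rel_prime; [exact prime_2 |].
  intros [q Hq]. subst d. rewrite Z.odd_mul in Hd. now rewrite Bool.andb_false_r in Hd.
Qed.

Lemma two_mul_half_sq_succ (n : Z) : Z.odd n = true -> 2 * ((n ^ 2 + 1) / 2) = n ^ 2 + 1.
Proof.
  intros Hn. apply Z.odd_spec in Hn. destruct Hn as [k ->].
  replace ((2 * k + 1) ^ 2 + 1) with ((2 * k * k + 2 * k + 1) * 2) by ring.
  rewrite Z.div_mul by lia. ring.
Qed.

Section ConicOrbit.

Variables eps g h K : Z.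
Hypothesis Hgh : g * h = eps * eps + 16.
Hypothesis Hg : 0 < g.
Hypothesis Hg_odd : Z.odd g = true.
Hypothesis HK : 4 * g < K.

Let c := K - 4 * g.

Definition conic (x y : Z) : Prop :=
  g * ((x + y) * (x + y)) - 2 * eps * (x + y) + h = K * (x * y).

Lemma conic_iff_pell_norm (x y : Z) :
  conic x y <-> pell_norm (c * K) (c * (x + y) + 4 * eps) (x - y) = 16 * eps * eps + 4 * h * c.
Proof.
  assert (E : 4 * c * (g * ((x + y) * (x + y)) - 2 * eps * (x + y) + h - K * (x * y)) =
              16 * eps * eps + 4 * h * c - pell_norm (c * K) (c * (x + y) + 4 * eps) (x - y))
    by (unfold pell_norm, c; ring).
  unfold conic. split; intro H.
  - rewrite H, Z.sub_diag, Z.mul_0_r in E. lia.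
  - rewrite H, Z.sub_diag in E. apply Z.mul_eq_0 in E. unfold c in E. lia.
Qed.

Lemma g_mul_conic_lhs (u : Z) :
  g * (g * (u * u) - 2 * eps * u + h) = (g * u - eps) * (g * u - eps) + 16.
Proof. lia. Qed.

Lemma conic_pos (x y : Z) : conic x y -> 0 < x + y -> 0 < x /\ 0 < y.
Proof.
  intros Hc Hu.
  assert (Hg_conic : g * (K * (x * y)) = (g * (x + y) - eps) * (g * (x + y) - eps) + 16).
  { unfold conic in Hc. rewrite <- Hc. apply g_mul_conic_lhs. }
  assert (Hpos : 0 < g * (K * (x * y)))
    by (rewrite Hg_conic; pose proof (Z.square_nonneg (g * (x + y) - eps)); lia).
  apply Z.mul_pos_cancel_l in Hpos; [| exact Hg].
  apply Z.mul_pos_cancel_l in Hpos; [| lia].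
  nia.
Qed.

Lemma good_of_conic (x y n : Z) :
  conic x y -> 0 < x + y -> Z.odd x = true -> Z.odd y = true ->
  4 * n = g * (x + y) - eps -> Z.odd n = true -> good eps n.
Proof.
  intros Hc Hu Hx Hy Hn Hn_odd.
  destruct (conic_pos x y Hc Hu) as [Hx0 Hy0].
  set (M := (n ^ 2 + 1) / 2).
  (* [32 M = 16 (n^2 + 1) = (g u - eps)^2 + 16 = g K x y] *)
  assert (HM : 2 ^ 5 * M = g * K * (x * y)).
  { replace (2 ^ 5 * M) with (16 * (2 * M)) by ring. unfold M.
    rewrite two_mul_half_sq_succ by exact Hn_odd. unfold conic in Hc.
    replace (g * K * (x * y)) with (g * (K * (x * y))) by ring. rewrite <- Hc.
    rewrite g_mul_conic_lhs, <- Hn. ring. }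
  exists (g * x), (g * y). fold M. split; [nia | split; [nia | split; [| split]]].
  - apply (odd_divide_mul_pow2 _ 5); [rewrite Z.odd_mul, Hg_odd, Hx; reflexivity | lia |].
    rewrite HM. exists (K * y). ring.
  - apply (odd_divide_mul_pow2 _ 5); [rewrite Z.odd_mul, Hg_odd, Hy; reflexivity | lia |].
    rewrite HM. exists (K * x). ring.
  - lia.
Qed.

Record admissible (x y n : Z) : Prop := {
  admissible_odd_x : Z.odd x = true;
  admissible_odd_y : Z.odd y = true;
  admissible_le : y <= x;
  admissible_conic : conic x y;
  admissible_pos : 0 < c * (x + y) + 4 * eps;
  admissible_n : 4 * n = g * (x + y) - eps;
  admissible_odd_n : Z.odd n = true }.

(* A Pell unit [P + Q sqrt(cK)] congruent to [1] modulo [16 c] moves admissible points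
   along the conic without changing the residues of [x], [y] mod 8 and of [n] mod 2. *)
Lemma admissible_step (P Q x y n : Z) :
  pell_norm (c * K) P Q = 1 -> 1 < P -> 0 <= Q -> (16 * c | P - 1) -> (16 * c | Q) ->
  admissible x y n ->
  exists x' y' n', admissible x' y' n' /\ c * (x + y) + 4 * eps < c * (x' + y') + 4 * eps.
Proof.
  intros HPQ HP HQ [p Hp] [q Hq] [Hx Hy Hle Hc HW Hn Hn_odd].
  assert (Hp' : P = 1 + p * (16 * c)) by lia.
  set (W := c * (x + y) + 4 * eps) in *.
  set (a := p * W + c * K * q * (x - y)).
  set (b := q * W + p * (x - y)).
  exists (x + 8 * a + 8 * c * b), (y + 8 * a - 8 * c * b), (n + 4 * g * a).
  assert (HW' : c * ((x + 8 * a + 8 * c * b) + (y + 8 * a - 8 * c * b)) + 4 * eps =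
                P * W + c * K * (Q * (x - y)))
    by (rewrite Hp', Hq; unfold a, W; ring).
  assert (HV' : (x + 8 * a + 8 * c * b) - (y + 8 * a - 8 * c * b) = P * (x - y) + Q * W)
    by (rewrite Hp', Hq; unfold b; ring).
  assert (Hc0 : 0 < c) by (unfold c; lia).
  assert (HQV : 0 <= c * K * (Q * (x - y)))
    by (apply Z.mul_nonneg_nonneg; apply Z.mul_nonneg_nonneg; lia).
  assert (HPW : 2 * W <= P * W) by (apply Z.mul_le_mono_nonneg_r; lia).
  split; [split |].
  - replace (x + 8 * a + 8 * c * b) with (x + 2 * (4 * a + 4 * c * b)) by ring.
    now rewrite Z.odd_add_mul_2.
  - replace (y + 8 * a - 8 * c * b) with (y + 2 * (4 * a - 4 * c * b)) by ring.
    now rewrite Z.odd_add_mul_2.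
  - assert (0 <= P * (x - y)) by (apply Z.mul_nonneg_nonneg; lia).
    assert (0 <= Q * W) by (apply Z.mul_nonneg_nonneg; lia). lia.
  - apply conic_iff_pell_norm. apply conic_iff_pell_norm in Hc.
    rewrite HW', HV', pell_norm_mul, HPQ, Z.mul_1_l. exact Hc.
  - rewrite HW'. lia.
  - replace (4 * (n + 4 * g * a)) with (4 * n + 16 * g * a) by ring. rewrite Hn. ring.
  - replace (n + 4 * g * a) with (n + 2 * (2 * g * a)) by ring.
    now rewrite Z.odd_add_mul_2.
  - rewrite HW'. lia.
Qed.

Lemma admissible_unbounded (x0 y0 n0 : Z) :
  nonsquare (c * K) -> admissible x0 y0 n0 ->
  forall N, exists x y n, admissible x y n /\ N < n.
Proof.
  intros Hns H0 N.
  assert (Hc0 : 0 < c) by (unfold c; lia).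
  destruct (pell_unit_congruent_pos (c * K) (16 * c) ltac:(nia) Hns ltac:(lia))
    as [P [Q [HPQ [HP [HQ [HP1 HQ1]]]]]].
  set (W0 := c * (x0 + y0) + 4 * eps).
  assert (Hiter : forall k : nat, exists x y n,
             admissible x y n /\ W0 + Z.of_nat k <= c * (x + y) + 4 * eps).
  { induction k as [| k [x [y [n [Hadm HW]]]]].
    - exists x0, y0, n0. split; [exact H0 | lia].
    - destruct (admissible_step P Q x y n HPQ HP ltac:(lia) HP1 HQ1 Hadm)
        as [x' [y' [n' [Hadm' HW']]]].
      exists x', y', n'. split; [exact Hadm' | lia]. }
  set (T := 4 * Z.abs N + Z.abs eps + 1).
  destruct (Hiter (Z.to_nat (c * T + 4 * Z.abs eps))) as [x [y [n [Hadm HW]]]].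
  exists x, y, n. split; [exact Hadm |].
  assert (HT : 0 <= c * T) by (apply Z.mul_nonneg_nonneg; unfold T; lia).
  assert (Hu : T <= x + y).
  { apply (Z.mul_le_mono_pos_l _ _ c Hc0). pose proof (admissible_pos _ _ _ H0). lia. }
  assert (x + y <= g * (x + y)).
  { rewrite <- (Z.mul_1_l (x + y)) at 1. apply Z.mul_le_mono_nonneg_r; unfold T in Hu; lia. }
  pose proof (admissible_n _ _ _ Hadm). unfold T in Hu. lia.
Qed.

Lemma good_unbounded_of_admissible (x0 y0 n0 : Z) :
  nonsquare (c * K) -> admissible x0 y0 n0 ->
  forall N, exists n, N < n /\ 0 < n /\ Z.odd n = true /\ good eps n.
Proof.
  intros Hns H0 N.
  destruct (admissible_unbounded x0 y0 n0 Hns H0 (Z.abs N + Z.abs eps))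
    as [x [y [n [[Hx Hy _ Hc _ Hn Hn_odd] HN]]]].
  assert (Hu : 0 < x + y) by (apply (Z.mul_pos_cancel_l _ _ Hg); lia).
  exists n. split; [lia | split; [lia | split; [exact Hn_odd |]]].
  exact (good_of_conic x y n Hc Hu Hx Hy Hn Hn_odd).
Qed.

End ConicOrbit.

Lemma good_unbounded_8t_plus_2 (t : Z) :
  forall N, exists n, N < n /\ 0 < n /\ Z.odd n = true /\ good (8 * t + 2) n.
Proof.
  assert (Hsq : forall z, 0 <= z ^ 2) by (intro z; nia).
  apply (good_unbounded_of_admissible (8 * t + 2) (16 * t ^ 2 + 8 * t + 5) 4
           (32 * (8 * t ^ 4 + 4 * t ^ 2 + 1)))
    with (x0 := 16 * t ^ 2 - 8 * t + 5) (y0 := 1) (n0 := 64 * t ^ 4 + 28 * t ^ 2 + 7).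
  - ring.
  - pose proof (Hsq (4 * t + 1)). lia.
  - apply Z.odd_spec. exists (8 * t ^ 2 + 4 * t + 2). ring.
  - pose proof (Hsq (8 * t - 2)). pose proof (Hsq (t ^ 2)). nia.
  - match goal with |- nonsquare ?D =>
      replace D with (2 * ((8 * t ^ 4 + 4 * t ^ 2 + 1) * (64 * t ^ 4 + 16 * t ^ 2 - 8 * t + 3))
                      * (8 * 8)) by ring end.
    apply nonsquare_mul_square; [apply nonsquare_two_mul_odd | lia].
    rewrite Z.odd_mul. apply andb_true_intro. split; apply Z.odd_spec.
    + exists (4 * t ^ 4 + 2 * t ^ 2). ring.
    + exists (32 * t ^ 4 + 8 * t ^ 2 - 4 * t + 1). ring.
  - split.
    + apply Z.odd_spec. exists (8 * t ^ 2 - 4 * t + 2). ring.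
    + reflexivity.
    + pose proof (Hsq (4 * t - 1)). lia.
    + unfold conic. ring.
    + pose proof (Hsq (4 * t - 1)). pose proof (Hsq (t ^ 2)). nia.
    + ring.
    + apply Z.odd_spec. exists (32 * t ^ 4 + 14 * t ^ 2 + 3). ring.
Qed.

Lemma good_unbounded_8t_plus_6 (t : Z) :
  forall N, exists n, N < n /\ 0 < n /\ Z.odd n = true /\ good (8 * t + 6) n.
Proof.
  assert (Hsq : forall z, 0 <= z ^ 2) by (intro z; nia).
  apply (good_unbounded_of_admissible (8 * t + 6) 1 ((8 * t + 6) * (8 * t + 6) + 16)
           (32 * (2 * t ^ 2 + 2 * t + 1)))
    with (x0 := 64 * t ^ 2 + 80 * t + 41) (y0 := 1) (n0 := 16 * t ^ 2 + 18 * t + 9).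
  - ring.
  - lia.
  - reflexivity.
  - pose proof (Hsq (2 * t + 1)). lia.
  - match goal with |- nonsquare ?D =>
      replace D with (2 * ((2 * t ^ 2 + 2 * t + 1) * (16 * t ^ 2 + 16 * t + 7)) * (8 * 8))
        by ring end.
    apply nonsquare_mul_square; [apply nonsquare_two_mul_odd | lia].
    rewrite Z.odd_mul. apply andb_true_intro. split; apply Z.odd_spec.
    + exists (t ^ 2 + t). ring.
    + exists (8 * t ^ 2 + 8 * t + 3). ring.
  - split.
    + apply Z.odd_spec. exists (32 * t ^ 2 + 40 * t + 20). ring.
    + reflexivity.
    + pose proof (Hsq (8 * t + 5)). lia.
    + unfold conic. ring.
    + pose proof (Hsq (8 * t + 4)). pose proof (Hsq (8 * t + 5)). nia.
    + ring.
    + apply Z.odd_spec. exists (8 * t ^ 2 + 9 * t + 4). ring.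
Qed.

Theorem theorem2 (eps : Z) (Heps : eps mod 4 = 2) :
  forall N : Z, exists n : Z, N < n /\ 0 < n /\ Z.odd n = true /\ good eps n.
Proof.
  pose proof (Z.div_mod eps 4 ltac:(lia)) as Hdiv. rewrite Heps in Hdiv.
  destruct (Z.Even_or_Odd (eps / 4)) as [[t Ht] | [t Ht]].
  - replace eps with (8 * t + 2) by lia. apply good_unbounded_8t_plus_2.
  - replace eps with (8 * t + 6) by lia. apply good_unbounded_8t_plus_6.
Qed.
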